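(* Let $p$ be a prime and let $K$ be a spherically complete non-Archimedean field whose residue field $k$ has characteristic $p$. Assume that (i) the value group $\Gamma=|K^\times|$ is $p$-divisible, and (ii) the residue field $k$ is perfect. Then $K$ is a perfectoid field.
   Context: A non-Archimedean field is a field complete with respect to a nontrivial rank-one (real-valued) non-Archimedean absolute value $|\cdot|$. It is spherically complete if every decreasing sequence of closed balls has nonempty intersection. A perfectoid field is a non-Archimedean field $K$ with non-discrete value group, residue characteristic $p$, such that the Frobenius $x\mapsto x^p$ is surjective on $\mathcal{O}_K/p$, where $\mathcal{O}_K=\{x:|x|\le1\}$. *)

From HB Require Import structures.
From mathcomp Require Import all_boot all_order all_algebra.
From mathcomp Require Import reals.
Set Implicit Arguments. Unset Strict Implicit. Unset Printing Implicit Defensive.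
Import Order.TTheory GRing.Theory Num.Theory.
Local Open Scope ring_scope.

Definition nonarch_abs (K : fieldType) (R : realType) (abs : K -> R) : Prop :=
  [/\ forall x, 0 <= abs x,
      forall x, abs x = 0 <-> x = 0,
      forall x y, abs (x * y) = abs x * abs y
    & forall x y, abs (x + y) <= Num.max (abs x) (abs y)].

Definition nontrivial_abs (K : fieldType) (R : realType) (abs : K -> R) : Prop :=
  exists x : K, x != 0 /\ abs x != 1.

Definition abs_cauchy (K : fieldType) (R : realType) (abs : K -> R)
  (u : nat -> K) : Prop :=
  forall e : R, 0 < e -> exists N : nat, forall m n : nat,
    (N <= m)%N -> (N <= n)%N -> abs (u m - u n) < e.

Definition abs_converges_to (K : fieldType) (R : realType) (abs : K -> R)
  (u : nat -> K) (l : K) : Prop :=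
  forall e : R, 0 < e -> exists N : nat, forall n : nat,
    (N <= n)%N -> abs (u n - l) < e.

Definition abs_complete (K : fieldType) (R : realType) (abs : K -> R) : Prop :=
  forall u : nat -> K, abs_cauchy abs u -> exists l : K, abs_converges_to abs u l.

Definition nonarch_field (K : fieldType) (R : realType) (abs : K -> R) : Prop :=
  [/\ nonarch_abs abs, nontrivial_abs abs & abs_complete abs].

Definition cball (K : fieldType) (R : realType) (abs : K -> R) (a : K) (r : R)
  : pred K := fun x => abs (x - a) <= r.

Definition spherically_complete (K : fieldType) (R : realType) (abs : K -> R)
  : Prop :=
  forall (a : nat -> K) (r : nat -> R),
    (forall n, 0 < r n) ->
    (forall n x, cball abs (a n.+1) (r n.+1) x -> cball abs (a n) (r n) x) ->
    exists x : K, forall n, cball abs (a n) (r n) x.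

(* the residue field k = O_K / m_K has characteristic p, i.e. p*1 lies in m_K *)
Definition residue_char (K : fieldType) (R : realType) (abs : K -> R) (p : nat)
  : Prop := abs (p%:R : K) < 1.

(* residue field is perfect: Frobenius is surjective on O_K / m_K *)
Definition residue_perfect (K : fieldType) (R : realType) (abs : K -> R) (p : nat)
  : Prop :=
  forall x : K, abs x <= 1 -> exists y : K, abs y <= 1 /\ abs (y ^+ p - x) < 1.

Definition value_group_pdivisible (K : fieldType) (R : realType) (abs : K -> R)
  (p : nat) : Prop :=
  forall x : K, x != 0 -> exists y : K, y != 0 /\ (abs y) ^+ p = abs x.

Definition value_group_nondiscrete (K : fieldType) (R : realType) (abs : K -> R)
  : Prop :=
  forall e : R, 0 < e -> exists x : K, x != 0 /\ 1 < abs x < 1 + e.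

(* Frobenius surjective on O_K / p O_K:  for x in O_K there is y in O_K with
   y^p - x in p O_K, i.e. |y^p - x| <= |p| *)
Definition frobenius_surj_mod_p (K : fieldType) (R : realType) (abs : K -> R)
  (p : nat) : Prop :=
  forall x : K, abs x <= 1 ->
    exists y : K, abs y <= 1 /\ abs (y ^+ p - x) <= abs (p%:R : K).

Definition perfectoid (K : fieldType) (R : realType) (abs : K -> R) (p : nat)
  : Prop :=
  [/\ prime p, nonarch_field abs, value_group_nondiscrete abs,
      residue_char abs p & frobenius_surj_mod_p abs p].

(* Nondiscreteness: if 1 < |a|, the iterated p-th roots of |a| in the value
   group are |a|^(1/p^k) > 1, and they tend to 1 by Bernoulli's inequality.

   Frobenius modulo p: fix x in O_K and measure y in O_K by its defect
   d(y) = |y^p - x|.  As (y + z)^p = y^p + z^p modulo p, a defect d(y) > |p|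
   can always be decreased: write x - y^p = c^p u with |u| = 1 (p-divisibility
   of the value group), lift a p-th root w of u modulo the maximal ideal
   (perfectness of k), and then d(y + c w) < d(y).  On the other hand
   |y' - y|^p <= d(y) as soon as |p| <= d(y) and d(y') <= d(y), so a sequence
   of decreasing defects tending to their infimum gives nested closed balls
   of radii d(y_n)^(1/p).  A point of their intersection (spherical
   completeness) attains the infimum, which therefore cannot exceed |p|. *)

From HB Require Import structures.
From mathcomp Require Import all_boot all_order all_algebra.
From mathcomp Require Import reals.
From mathcomp Require Import boolp classical_sets ring lra.
Set Implicit Arguments. Unset Strict Implicit. Unset Printing Implicit Defensive.
Import Order.TTheory GRing.Theory Num.Theory.
Local Open Scope ring_scope.

Lemma bernoulli_ineq (R : realDomainType) (e : R) n :
  0 <= e -> 1 + n%:R * e <= (1 + e) ^+ n.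
Proof.
move=> e_ge0; elim: n => [|n IH]; first by rewrite mul0r addr0 expr0.
have n_ge0 : 0 <= n%:R :> R by [].
rewrite exprS -addn1 natrD; nra.
Qed.

Lemma exists_nonincreasing_minimizing_seq (T : Type) (R : realType)
    (P : set T) (g : T -> R) :
  (exists t, P t) ->
  exists u : nat -> T,
    [/\ forall n, P (u n), forall n, g (u n.+1) <= g (u n)
      & forall a, (forall n, a <= g (u n)) -> a <= inf [set g t | t in P]%classic].
Proof.
move=> [t0 Pt0]; set S := [set g t | t in P]%classic.
have S_neq0 : (S !=set0)%classic by exists (g t0), t0.
have /choice [v v_inf] : forall n, exists t, P t /\ g t < inf S + n.+1%:R^-1.
  move=> n; have : inf S < inf S + n.+1%:R^-1 by rewrite ltrDl invr_gt0 ltr0Sn.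
  by move=> /(inf_lt S_neq0) [_ [t Pt <-] gt_lt]; exists t.
pose fix u n := if n is m.+1 then
  (if g (v n) <= g (u m) then v n else u m) else v 0.
have Pu n : P (u n).
  elim: n => [|n IH] /=; first exact: (v_inf 0).1.
  by case: ifP => _; [exact: (v_inf _).1 | exact: IH].
have u_nonincr n : g (u n.+1) <= g (u n).
  by rewrite /=; case: ifPn => //; rewrite -ltNge => /ltW.
have u_le_v n : g (u n) <= g (v n).
  by case: n => [|n] /=; [| case: ifPn => //; rewrite -ltNge => /ltW].
exists u; split => // a a_le; rewrite leNgt; apply/negP => /ltr_add_invr [k k_lt].
have := le_lt_trans (le_trans (a_le k) (u_le_v k)) (v_inf k).2.
by move=> /lt_trans /(_ k_lt); rewrite ltxx.
Qed.

Section NonArchAbs.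
Variables (K : fieldType) (R : realType) (abs : K -> R).
Hypothesis abs_na : nonarch_abs abs.

Lemma abs_ge0 x : 0 <= abs x. Proof. by case: abs_na. Qed.

Lemma abs_eq0 x : abs x = 0 <-> x = 0. Proof. by case: abs_na. Qed.

Lemma absM x y : abs (x * y) = abs x * abs y. Proof. by case: abs_na. Qed.

Lemma absD_le x y : abs (x + y) <= Num.max (abs x) (abs y).
Proof. by case: abs_na. Qed.

Lemma abs0 : abs 0 = 0. Proof. exact/abs_eq0. Qed.

Lemma abs_gt0 x : x != 0 -> 0 < abs x.
Proof. by move=> x0; rewrite lt_def abs_ge0 andbT; apply: contra x0 => /eqP/abs_eq0->. Qed.

Lemma abs1 : abs 1 = 1.
Proof.
have abs1_neq0 : abs 1 != 0 by rewrite gt_eqF ?abs_gt0 ?oner_neq0.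
by apply: (mulfI abs1_neq0); rewrite -absM !mulr1.
Qed.

Lemma absN x : abs (- x) = abs x.
Proof.
have absN1 : abs (-1) = 1.
  have /eqP : abs (-1) ^+ 2 = 1 by rewrite expr2 -absM mulrNN mulr1 abs1.
  rewrite sqrf_eq1 => /orP[/eqP // | /eqP absN1].
  by have := abs_ge0 (-1); rewrite absN1 ler0N1.
by rewrite -mulN1r absM absN1 mul1r.
Qed.

Lemma absX x n : abs (x ^+ n) = abs x ^+ n.
Proof. by elim: n => [|n IH]; rewrite ?expr0 ?abs1 // !exprS absM IH. Qed.

Lemma absV x : abs x^-1 = (abs x)^-1.
Proof.
have [-> | x0] := eqVneq x 0; first by rewrite invr0 abs0 invr0.
have absx_neq0 : abs x != 0 by rewrite gt_eqF ?abs_gt0.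
by apply: (mulfI absx_neq0); rewrite -absM !mulfV // abs1.
Qed.

Lemma absMn_le x n : abs (x *+ n) <= abs x.
Proof.
elim: n => [|n IH]; first by rewrite mulr0n abs0 abs_ge0.
by rewrite mulrS; apply: le_trans (absD_le _ _) _; rewrite ge_max lexx IH.
Qed.

Lemma abs_le_max_sub x y : abs x <= Num.max (abs y) (abs (x - y)).
Proof. by have := absD_le y (x - y); rewrite addrC subrK. Qed.

Lemma absB_le_max x y z : abs (x - z) <= Num.max (abs (x - y)) (abs (y - z)).
Proof. by have := absD_le (x - y) (y - z); rewrite addrA subrK. Qed.

Lemma absD_le1 x y : abs x <= 1 -> abs y <= 1 -> abs (x + y) <= 1.
Proof. by move=> x1 y1; apply: le_trans (absD_le _ _) _; rewrite ge_max x1 y1. Qed.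

Lemma absB_le1 x y : abs x <= 1 -> abs y <= 1 -> abs (x - y) <= 1.
Proof. by move=> x1 y1; rewrite absD_le1 ?absN. Qed.

Section PrimePowers.
Variable p : nat.
Hypothesis p_prime : prime p.

Lemma abs_expD_sub_le a b : abs a <= 1 -> abs b <= 1 ->
  abs ((a + b) ^+ p - a ^+ p - b ^+ p) <= abs p%:R.
Proof.
move=> a1 b1; case: p p_prime (prime_gt0 p_prime) => // q q_prime _.
rewrite exprDn big_ord_recl big_ord_recr /= subn0 subnn bin0 binn !expr0.
rewrite mulr1 mul1r !mulr1n.
have -> : forall u v w : K, u + (v + w) - u - w = v by move=> u v w; ring.
apply: (big_ind (fun z => abs z <= abs q.+1%:R)).
- by rewrite abs0 abs_ge0.
- by move=> y z yp zp; apply: le_trans (absD_le _ _) _; rewrite ge_max yp zp.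
move=> i _; have /dvdnP [k ->] : (q.+1 %| 'C(q.+1, bump 0 i))%N.
  by apply: prime_dvd_bin => //; rewrite /bump /= add1n ltnS ltn_ord.
rewrite mulrnA -[in X in X <= _]mulr_natr absM ler_piMl ?abs_ge0 //.
apply: le_trans (absMn_le _ _) _.
by rewrite absM !absX mulr_ile1 ?exprn_ge0 ?exprn_ile1 ?abs_ge0.
Qed.

Lemma abs_expB_sub_le a b : abs a <= 1 -> abs b <= 1 ->
  abs (a ^+ p - b ^+ p - (a - b) ^+ p) <= abs p%:R.
Proof.
move=> a1 b1; have := abs_expD_sub_le b1 (absB_le1 a1 b1).
by rewrite [b + _]addrC subrK.
Qed.

Lemma abs_subXX_le a b : abs a <= 1 -> abs b <= 1 ->
  abs (a ^+ p - b ^+ p) <= Num.max (abs (a - b) ^+ p) (abs p%:R).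
Proof.
move=> a1 b1; apply: le_trans (abs_le_max_sub _ ((a - b) ^+ p)) _.
rewrite absX ge_max le_max lexx /=.
by rewrite le_max (abs_expB_sub_le a1 b1) orbT.
Qed.

Lemma abs_subX_le a b : abs a <= 1 -> abs b <= 1 ->
  abs (a - b) ^+ p <= Num.max (abs (a ^+ p - b ^+ p)) (abs p%:R).
Proof.
move=> a1 b1; have D_le := abs_expB_sub_le a1 b1.
rewrite -absX -[(a - b) ^+ p](subKr (a ^+ p - b ^+ p)).
apply: le_trans (absD_le _ _) _.
by rewrite absN ge_max le_max lexx /= le_max D_le orbT.
Qed.

End PrimePowers.

Lemma exists_abs_gt1 : nontrivial_abs abs -> exists a, 1 < abs a.
Proof.
case=> x [x0 absx_neq1]; case: (ltgtP (abs x) 1) => [lt1 | gt1 | eq1].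
- by exists x^-1; rewrite absV invf_gt1 ?abs_gt0.
- by exists x.
- by rewrite eq1 eqxx in absx_neq1.
Qed.

Lemma value_group_pdivisible_expn p : value_group_pdivisible abs p ->
  forall a n, a != 0 -> exists b, b != 0 /\ abs b ^+ (p ^ n) = abs a.
Proof.
move=> pdiv a n a0; elim: n => [|n [b [b0 <-]]]; first by exists a; rewrite expr1.
have [c [c0 cb]] := pdiv b b0.
by exists c; split => //; rewrite expnS exprM cb.
Qed.

Lemma value_group_nondiscrete_of_pdivisible p : (1 < p)%N ->
  nontrivial_abs abs -> value_group_pdivisible abs p ->
  value_group_nondiscrete abs.
Proof.
move=> p_gt1 /exists_abs_gt1 [a a_gt1] pdiv e e_gt0.
have a0 : a != 0 by apply: contraTneq a_gt1 => ->; rewrite abs0 ltr10.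
have [k a_lt] : exists k, abs a < 1 + k%:R * e.
  exists (Num.Def.archi_bound (abs a / e)).
  rewrite ltr_wpDl // -ltr_pdivrMr //; apply: archi_boundP.
  by rewrite divr_ge0 ?abs_ge0 ?ltW.
have [b [b0 ba]] := value_group_pdivisible_expn pdiv k a0.
exists b; split => //; apply/andP; split.
- rewrite ltNge; apply: contraTN a_gt1 => b_le1.
  by rewrite -leNgt -ba exprn_ile1 ?abs_ge0.
- rewrite ltNge; apply: contraTN a_lt => b_ge; rewrite -leNgt -ba.
  have k_le : k%:R <= (p ^ k)%:R :> R by rewrite ler_nat ltnW // ltn_expl.
  apply: le_trans (_ : _ <= (1 + e) ^+ (p ^ k)) _.
    apply: le_trans (bernoulli_ineq (p ^ k) (ltW e_gt0)).
    by rewrite lerD2l; apply: ler_wpM2r k_le; exact: ltW.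
  by apply: lerXn2r; rewrite // nnegrE ?abs_ge0 // addr_ge0 // ltW.
Qed.

Section Frobenius.
Variable p : nat.
Hypothesis p_prime : prime p.
Hypothesis pdiv : value_group_pdivisible abs p.

Section Defect.
Variable x : K.
Hypothesis x_le1 : abs x <= 1.

Definition frob_defect y := abs (y ^+ p - x).
Local Notation f := frob_defect.

Lemma frob_defect_le1 y : abs y <= 1 -> f y <= 1.
Proof. by move=> y1; rewrite absB_le1 // absX exprn_ile1 // abs_ge0. Qed.

Lemma frob_defect_root y : abs p%:R < f y -> exists r, 0 < r /\ r ^+ p = f y.
Proof.
move=> p_lt; have d0 : y ^+ p - x != 0.
  apply/eqP => d0; move: p_lt; rewrite /frob_defect d0 abs0.
  by move=> /(le_lt_trans (abs_ge0 _)); rewrite ltxx.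
by have [c [c0 cd]] := pdiv d0; exists (abs c); rewrite abs_gt0.
Qed.

Lemma frob_defect_improve : residue_perfect abs p ->
  forall y, abs y <= 1 -> abs p%:R < f y ->
  exists2 y', abs y' <= 1 & f y' < f y.
Proof.
move=> perfect y y1 p_lt.
set d := x - y ^+ p.
have d_abs : abs d = f y by rewrite /d -opprB absN.
have fy_gt0 : 0 < f y by apply: le_lt_trans p_lt; exact: abs_ge0.
have d0 : d != 0 by apply: contraTneq fy_gt0 => d0; rewrite -d_abs d0 abs0 ltxx.
have [c [c0 cd]] := pdiv d0.
have cp0 : c ^+ p != 0 by rewrite expf_neq0.
have u1 : abs (d / c ^+ p) <= 1.
  by rewrite absM absV absX cd mulfV // gt_eqF ?abs_gt0.
have [w [w1 w_close]] := perfect _ u1.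
set z := c * w.
have zd_lt : abs (z ^+ p - d) < f y.
  have -> : z ^+ p - d = c ^+ p * (w ^+ p - d / c ^+ p).
    by rewrite /z exprMn mulrBr mulrCA mulfV // mulr1.
  by rewrite absM absX cd d_abs -[ltRHS]mulr1 ltr_pM2l // -d_abs abs_gt0.
have z1 : abs z <= 1.
  rewrite -(expr_le1 (prime_gt0 p_prime)) ?abs_ge0 // -absX /z exprMn absM.
  rewrite absX cd d_abs (le_trans _ (frob_defect_le1 y1)) //.
  apply: ler_piMr; first exact: ltW.
  by rewrite absX; apply: exprn_ile1; rewrite ?abs_ge0.
exists (y + z); first exact: absD_le1.
have -> : f (y + z) = abs (((y + z) ^+ p - y ^+ p - z ^+ p) + (z ^+ p - d)).
  by rewrite /f /d; congr abs; ring.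
apply: le_lt_trans (absD_le _ _) _; rewrite gt_max zd_lt andbT.
exact: le_lt_trans (abs_expD_sub_le p_prime y1 z1) p_lt.
Qed.

Lemma frob_defect_le_of_near y z : abs y <= 1 -> abs z <= 1 ->
  abs p%:R <= f y -> abs (z - y) ^+ p <= f y -> f z <= f y.
Proof.
move=> y1 z1 p_le zy_le.
have -> : f z = abs ((z ^+ p - y ^+ p) + (y ^+ p - x)) by rewrite /f addrA subrK.
apply: le_trans (absD_le _ _) _; rewrite ge_max lexx andbT.
apply: le_trans (abs_subXX_le p_prime z1 y1) _.
by rewrite ge_max zy_le p_le.
Qed.

Lemma near_of_frob_defect_le y z : abs y <= 1 -> abs z <= 1 ->
  abs p%:R <= f y -> f z <= f y -> abs (z - y) ^+ p <= f y.
Proof.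
move=> y1 z1 p_le fz_le.
apply: le_trans (abs_subX_le p_prime z1 y1) _; rewrite ge_max p_le andbT.
apply: le_trans (absB_le_max _ x _) _.
by rewrite ge_max fz_le -opprB absN lexx.
Qed.

Lemma exists_frob_defect_below_seq : spherically_complete abs ->
  forall u : nat -> K, (forall n, abs (u n) <= 1) ->
  (forall n, abs p%:R < f (u n)) -> (forall n, f (u n.+1) <= f (u n)) ->
  exists2 z, abs z <= 1 & forall n, f z <= f (u n).
Proof.
move=> sph_compl u u1 p_lt u_nonincr.
have /choice [r r_root] := fun n => frob_defect_root (p_lt n).
have p_gt0 := prime_gt0 p_prime.
have r_ge0 n : 0 <= r n by exact: ltW (r_root n).1.
have ler_r n w : 0 <= w -> (w <= r n) = (w ^+ p <= f (u n)).
  by move=> w_ge0; rewrite -(r_root n).2 ler_pXn2r ?nnegrE.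
have p_le n : abs p%:R <= f (u n) by exact: ltW.
have r_nonincr n : r n.+1 <= r n.
  by rewrite ler_r // (r_root n.+1).2 u_nonincr.
have u_near n : abs (u n.+1 - u n) <= r n.
  by rewrite ler_r ?abs_ge0 //; apply: near_of_frob_defect_le.
have nested n w : cball abs (u n.+1) (r n.+1) w -> cball abs (u n) (r n) w.
  move=> w_in; apply: le_trans (absB_le_max _ (u n.+1) _) _.
  by rewrite ge_max u_near (le_trans w_in).
have [z z_in] := sph_compl u r (fun n => (r_root n).1) nested.
have z1 : abs z <= 1.
  apply: le_trans (abs_le_max_sub z (u 0)) _; rewrite ge_max u1.
  apply: le_trans (z_in 0) _.
  by rewrite -(expr_le1 p_gt0) // (r_root 0).2; apply: frob_defect_le1.
exists z => // n; apply: frob_defect_le_of_near => //.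
by have := z_in n; rewrite /cball ler_r ?abs_ge0.
Qed.

End Defect.

Lemma frobenius_surj_mod_p_of_spherically_complete :
  spherically_complete abs -> residue_perfect abs p ->
  frobenius_surj_mod_p abs p.
Proof.
move=> sph_compl perfect x x1; apply: contrapT => no_sol.
have p_lt y : abs y <= 1 -> abs p%:R < frob_defect x y.
  by move=> y1; case: leP => // ?; exfalso; apply: no_sol; exists y.
set O := [set y : K | abs y <= 1]%classic.
have O0 : O 0 by rewrite /O /= abs0 ler01.
have [u [u1 u_nonincr u_inf]] :=
  exists_nonincreasing_minimizing_seq (frob_defect x) (ex_intro O 0 O0).
have [z z1 z_le] := exists_frob_defect_below_seq x1 sph_compl u1
  (fun n => p_lt _ (u1 n)) u_nonincr.
have [y y1 y_lt] := frob_defect_improve x1 perfect z1 (p_lt z z1).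
set S := [set frob_defect x t | t in O]%classic.
have inf_le : lbound S (inf S).
  by apply: ge_inf; exists 0 => _ [t _ <-]; exact: abs_ge0.
have := lt_le_trans y_lt (u_inf _ z_le).
by rewrite ltNge inf_le //; exists y.
Qed.

End Frobenius.
End NonArchAbs.

Theorem theorem5p5 (p : nat) (K : fieldType) (R : realType) (abs : K -> R) :
  prime p ->
  nonarch_field abs ->
  spherically_complete abs ->
  residue_char abs p ->
  value_group_pdivisible abs p ->
  residue_perfect abs p ->
  perfectoid abs p.
Proof.
move=> p_prime na_field sph_compl res_char pdiv perfect.
have [abs_na nontriv _] := na_field.
split => //.
- exact: value_group_nondiscrete_of_pdivisible (prime_gt1 p_prime) nontriv pdiv.
- exact: frobenius_surj_mod_p_of_spherically_complete.
Qed.
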